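(* For every $d\geq 2$, $m(\ell_\infty^d)=2d-1$, where $\ell_\infty^d$ is $\mathbb{R}^d$ with the norm $\|x\|_\infty=\max_i |x^{(i)}|$.
   Context: For a set $S$ in a normed space, its midpoint set is $M(S)=\{\tfrac12(x+y): x,y\in S,\ x\neq y\}$. A set $S$ is an M-set if every vector in $M(S)$ has norm exactly $1$ and every vector in $S$ has norm strictly greater than $1$. $m(X)$ denotes the largest cardinality of an M-set in the normed space $X$ if such a largest finite cardinality exists, and $m(X)=\infty$ otherwise. *)

From mathcomp Require Import ssreflect ssrbool eqtype ssrnat seq fintype.
From Stdlib Require Import Reals List.
Open Scope R_scope.

Definition vec (d : nat) := 'I_d -> R.

Definition norm_inf {d : nat} (x : vec d) : R :=
  List.fold_right Rmax 0 (List.map (fun i => Rabs (x i)) (enum 'I_d)).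

Definition midpoint {d : nat} (x y : vec d) : vec d :=
  fun i => (x i + y i) / 2.

Definition is_Mset {d : nat} (S : vec d -> Prop) : Prop :=
  (forall x y, S x -> S y -> x <> y -> norm_inf (midpoint x y) = 1) /\
  (forall x, S x -> norm_inf x > 1).

(* m(l_inf^d) = n : there is an M-set with exactly n elements, and every
   finite subset of any M-set has at most n elements (hence every M-set is
   finite with at most n elements). *)
Definition m_equals (d n : nat) : Prop :=
  (exists l : list (vec d),
      List.NoDup l /\ List.length l = n /\ is_Mset (fun x => List.In x l)) /\
  (forall S : vec d -> Prop, is_Mset S ->
     forall l : list (vec d), List.NoDup l -> (forall x, List.In x l -> S x) ->
       (List.length l <= n)%nat).

(* Label each point x of an M-set by a coordinate i and a sign s with
   s * x_i > 1.  Two distinct points cannot share a label, for then the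
   midpoint would have |i-th coordinate| > 1; hence at most 2d points.  If all
   2d labels occur, let a, b carry the labels (k0,+) and (k0,-).  Their
   midpoint has some coordinate j with s * (a_j + b_j) = 2.  If j <> k0, the
   point labelled (j,s) would push one of the midpoints with a or b beyond
   the face x_j = s.  If j = k0, then a_k0 > 1 > -1 > b_k0 forces
   a_k0 - b_k0 > 4, whereas any third point c gives
   a_k0 - b_k0 = (a_k0 + c_k0) - (b_k0 + c_k0) <= 4.
   Conversely 2 e_k0 together with -e_k0 +- 2 e_k (k <> k0) is an M-set of
   size 2d - 1. *)

From mathcomp Require Import ssreflect ssrfun ssrbool eqtype ssrnat seq fintype.
From Stdlib Require Import Reals List Lra ClassicalEpsilon Classical FinFun.
Open Scope R_scope.

Set Implicit Arguments.
Unset Strict Implicit.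

Lemma In_mem (T : eqType) (x : T) (s : list T) : List.In x s <-> x \in s.
Proof.
elim: s => [|y s IH] //=; rewrite seq.in_cons.
by split=> [[->|/IH->] | /orP[/eqP->|/IH]]; rewrite ?eqxx ?orbT; auto.
Qed.

Lemma size_length (A : Type) (s : list A) : size s = length s.
Proof. by elim: s => //= x s ->. Qed.

Lemma uniq_NoDup (T : eqType) (s : list T) : uniq s -> NoDup s.
Proof.
elim: s => [|x s IH] /=; first by constructor.
by case/andP=> xs us; constructor; [move/In_mem; apply/negP | exact: IH].
Qed.

Lemma In_enum (T : finType) (A : {pred T}) x : List.In x (enum A) <-> x \in A.
Proof. by rewrite In_mem mem_enum. Qed.

Lemma NoDup_inj_cover (A : Type) (T : finType) (f : A -> T) (l : list A) :
  NoDup l -> (forall x y, List.In x l -> List.In y l -> f x = f y -> x = y) ->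
  (#|T| <= length l)%nat -> forall t, exists2 x, List.In x l & f x = t.
Proof.
move=> l_uniq f_inj T_le t.
have : List.In t (List.map f l).
  apply: (NoDup_length_incl (l' := enum T)); last exact/In_enum.
  - exact: Injective_map_NoDup_in.
  - by rewrite length_map -size_length -cardE; apply/leP.
  - by move=> u _; apply/In_enum.
by case/in_map_iff=> x [fx xl]; exists x.
Qed.

Section FoldMax.
Variables (A : Type) (f : A -> R).

Lemma fold_Rmax_ge l y : List.In y l -> f y <= fold_right Rmax 0 (List.map f l).
Proof.
elim: l => [|z l IH] //= [->|yl]; first exact: Rmax_l.
exact: Rle_trans (IH yl) (Rmax_r _ _).
Qed.

Lemma fold_Rmax_le l c : 0 <= c -> (forall y, List.In y l -> f y <= c) ->
  fold_right Rmax 0 (List.map f l) <= c.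
Proof.
move=> c_ge0; elim: l => [|z l IH] //= le_c.
by apply: Rmax_lub; [apply: le_c; left | apply: IH => y yl; apply: le_c; right].
Qed.

Lemma fold_Rmax_attained l : fold_right Rmax 0 (List.map f l) = 0 \/
  exists2 y, List.In y l & fold_right Rmax 0 (List.map f l) = f y.
Proof.
elim: l => [|z l IH] /=; first by left.
rewrite /Rmax; case: Rle_dec => _; last by right; exists z; first left.
by case: IH => [->|[y yl ->]]; [left | right; exists y; first right].
Qed.

End FoldMax.

Section NormInf.
Variable d : nat.
Implicit Types x y : vec d.

Lemma Rabs_le_norm_inf x i : Rabs (x i) <= norm_inf x.
Proof. by apply: (fold_Rmax_ge (fun i => Rabs (x i))); apply/In_enum. Qed.

Lemma norm_inf_le x c : 0 <= c -> (forall i, Rabs (x i) <= c) -> norm_inf x <= c.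
Proof. by move=> c_ge0 le_c; apply: fold_Rmax_le => // i _; apply: le_c. Qed.

Lemma norm_inf_gt1 x : norm_inf x > 1 -> exists i, Rabs (x i) > 1.
Proof.
move=> x_gt1; apply: NNPP => no_i.
suff : norm_inf x <= 1 by lra.
apply: norm_inf_le => [|i]; first lra.
by apply: Rnot_lt_le => x_i; apply: no_i; exists i.
Qed.

Lemma norm_inf_eq1 x :
  norm_inf x = 1 <-> (forall i, Rabs (x i) <= 1) /\ exists i, Rabs (x i) = 1.
Proof.
split=> [x1 | [le1 [i xi1]]].
  split=> [i|]; first by rewrite -x1; apply: Rabs_le_norm_inf.
  case: (fold_Rmax_attained (fun i => Rabs (x i)) (enum 'I_d)); rewrite -/(norm_inf x) x1.
    lra.
  by case=> i _ xi; exists i.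
apply: Rle_antisym; first by apply: norm_inf_le => //; lra.
by rewrite -xi1; apply: Rabs_le_norm_inf.
Qed.

Lemma norm_inf_midpoint_eq1 x y : norm_inf (midpoint x y) = 1 <->
  (forall i, Rabs (x i + y i) <= 2) /\ exists i, Rabs (x i + y i) = 2.
Proof.
have half z : Rabs (z / 2) = Rabs z / 2 by split_Rabs; lra.
rewrite norm_inf_eq1 /midpoint; split=> [[le1 [i eq1]] | [le2 [i eq2]]].
  split; last exists i; [move=> j; move: (le1 j) | move: eq1]; rewrite half; lra.
split; last exists i; [move=> j; move: (le2 j) | move: eq2]; rewrite half; lra.
Qed.

End NormInf.

Definition sgnb (s : bool) : R := if s then 1 else -1.

Lemma sgnb_Rabs (z : R) : exists s, sgnb s * z = Rabs z.
Proof. by case: (Rle_dec 0 z) => z0; [exists true | exists false]; rewrite /sgnb; split_Rabs; lra. Qed.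

Definition outward {d : nat} (x : vec d) (p : 'I_d * bool) : Prop := 1 < sgnb p.2 * x p.1.

Section MsetUpperBound.
Variables (d : nat) (S : vec d -> Prop).
Hypothesis S_Mset : is_Mset S.

Lemma Mset_sum_coord_le x y i : S x -> S y -> x <> y -> Rabs (x i + y i) <= 2.
Proof. by move=> Sx Sy xy; case/norm_inf_midpoint_eq1: (proj1 S_Mset x y Sx Sy xy). Qed.

Lemma Mset_sum_coord_attained x y : S x -> S y -> x <> y ->
  exists j s, sgnb s * (x j + y j) = 2.
Proof.
move=> Sx Sy xy; case/norm_inf_midpoint_eq1: (proj1 S_Mset x y Sx Sy xy) => _ [j xy2].
by have [s sxy] := sgnb_Rabs (x j + y j); exists j, s; rewrite sxy.
Qed.

Lemma Mset_outward x : S x -> exists p, outward x p.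
Proof.
move=> Sx; have [i xi] := norm_inf_gt1 (proj2 S_Mset x Sx).
by have [s si] := sgnb_Rabs (x i); exists (i, s); rewrite /outward /= si.
Qed.

Lemma Mset_outward_inj x y p : S x -> S y -> outward x p -> outward y p -> x = y.
Proof.
move=> Sx Sy; case: p => i s; rewrite /outward /= => xi yi.
apply: NNPP => xy; move: (Mset_sum_coord_le i Sx Sy xy).
by case: s xi yi; rewrite /sgnb; split_Rabs; lra.
Qed.

Lemma Mset_outward_face a b w j s : S a -> S b -> S w ->
  sgnb s * (a j + b j) = 2 -> outward w (j, s) -> w = a \/ w = b.
Proof.
move=> Sa Sb Sw ab2; rewrite /outward /= => wj.
apply: NNPP => /not_or_and [wa wb].
move: (Mset_sum_coord_le j Sw Sa wa) (Mset_sum_coord_le j Sw Sb wb).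
by case: s ab2 wj; rewrite /sgnb; split_Rabs; lra.
Qed.

Lemma Mset_coord_diff_le a b c i : S a -> S b -> S c -> c <> a -> c <> b ->
  a i - b i <= 4.
Proof.
move=> Sa Sb Sc ca cb.
move: (Mset_sum_coord_le i Sc Sa ca) (Mset_sum_coord_le i Sc Sb cb).
split_Rabs; lra.
Qed.

Lemma Mset_length_lt (k0 k1 : 'I_d) l : k0 != k1 ->
  NoDup l -> (forall x, List.In x l -> S x) -> (length l < 2 * d)%nat.
Proof.
move=> k01 l_uniq lS; rewrite ltnNge; apply/negP => l_ge.
pose label x := epsilon (inhabits (k0, true)) (outward x).
have label_outward x : List.In x l -> outward x (label x).
  by move/lS/Mset_outward; apply: epsilon_spec.
have label_inj x y : List.In x l -> List.In y l -> label x = label y -> x = y.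
  move=> xl yl lxy; apply: (Mset_outward_inj (lS _ xl) (lS _ yl) (label_outward _ xl)).
  by rewrite lxy; apply: label_outward.
have card_labels : (#|{: 'I_d * bool}| <= length l)%nat.
  by rewrite card_prod card_ord card_bool mulnC.
have cover := NoDup_inj_cover l_uniq label_inj card_labels.
have [a al la] := cover (k0, true).
have [b bl lb] := cover (k0, false).
have [c cl lc] := cover (k1, true).
have distinct x y : label x <> label y -> x <> y by move=> lxy xy; apply: lxy; rewrite xy.
have ab : a <> b by apply: distinct; rewrite la lb.
have ca : c <> a by apply: distinct; rewrite lc la => -[/eqP]; rewrite eq_sym (negPf k01).
have cb : c <> b by apply: distinct; rewrite lc lb => -[].
have [j [s abj]] := Mset_sum_coord_attained (lS _ al) (lS _ bl) ab.
case: (eqVneq j k0) => [jk0 | jk0].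
  have := Mset_coord_diff_le k0 (lS _ al) (lS _ bl) (lS _ cl) ca cb.
  move: (label_outward _ al) (label_outward _ bl) abj.
  by rewrite la lb jk0 /outward /sgnb /=; case: s; lra.
have [w wl lw] := cover (j, s).
have w_out : outward w (j, s) by rewrite -lw; apply: label_outward.
by case: (Mset_outward_face (lS _ al) (lS _ bl) (lS _ wl) abj w_out) => wab;
  move: lw; rewrite wab ?la ?lb => -[jk0']; rewrite jk0' eqxx in jk0.
Qed.

End MsetUpperBound.

Section Construction.
Variables (d : nat) (k0 : 'I_d).

Definition Mpoint (p : 'I_d * bool) : vec d :=
  fun i => if i == p.1 then 2 * sgnb p.2 else if i == k0 then -1 else 0.

Definition Mpoints : list (vec d) := List.map Mpoint (enum (predC1 (k0, false))).

Lemma Mpoint_inj : injective Mpoint.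
Proof.
move=> [k s] [k' s'] /(congr1 (fun x => x k)); rewrite /Mpoint /= eqxx.
case: eqP => [<- | _]; last by case: (k == k0); case: s; rewrite /sgnb; lra.
by case: s s' => [] []; rewrite /sgnb //; lra.
Qed.

Lemma Mpoint_sum_le p q i : p != (k0, false) -> q != (k0, false) -> p != q ->
  Rabs (Mpoint p i + Mpoint q i) <= 2.
Proof.
case: p q => [k s] [k' s'] p0 q0 pq; rewrite /Mpoint /=.
case: (i =P k) => [ik|_]; case: (i =P k') => [ik'|_]; case: (i =P k0) => [ik0|_]; subst;
  move: p0 q0 pq; case: s; case: s' => /=; rewrite /sgnb ?eqxx //=; split_Rabs; lra.
Qed.

Lemma Mpoint_sum_attained p q : p != (k0, false) -> q != (k0, false) -> p != q ->
  exists i, Rabs (Mpoint p i + Mpoint q i) = 2.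
Proof.
case: p q => [k s] [k' s'] p0 q0 pq; rewrite /Mpoint /=.
have sgnb2 b : Rabs (2 * sgnb b) = 2 by case: b; rewrite /sgnb; split_Rabs; lra.
case: (eqVneq k k') => [kk' | kk'].
  have kk0 : k != k0.
    apply/eqP => kk0; move: p0 q0 pq; rewrite -kk' kk0.
    by case: s; case: s'; rewrite ?eqxx.
  exists k0; rewrite -kk' eq_sym (negPf kk0) eqxx; split_Rabs; lra.
case: (eqVneq k k0) => [kk0 | kk0].
  subst k; rewrite eq_sym in kk'; exists k'; rewrite (negPf kk') eqxx Rplus_0_l; exact: sgnb2.
exists k; rewrite eqxx (negPf kk') (negPf kk0) Rplus_0_r; exact: sgnb2.
Qed.

Lemma Mpoint_norm_gt1 p : norm_inf (Mpoint p) > 1.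
Proof.
apply: Rlt_le_trans (Rabs_le_norm_inf _ p.1).
by rewrite /Mpoint eqxx; case: p.2; rewrite /sgnb; split_Rabs; lra.
Qed.

Lemma In_Mpoints x : List.In x Mpoints <-> exists2 p, p != (k0, false) & x = Mpoint p.
Proof.
rewrite /Mpoints in_map_iff; split=> [[p [<- /In_enum]] | [p p0 ->]]; first by exists p.
by exists p; split; last exact/In_enum.
Qed.

Lemma NoDup_Mpoints : NoDup Mpoints.
Proof. by apply: Injective_map_NoDup; [exact: Mpoint_inj | apply/uniq_NoDup/enum_uniq]. Qed.

Lemma length_Mpoints : length Mpoints = (2 * d).-1.
Proof. by rewrite length_map -size_length -cardE cardC1 card_prod card_ord card_bool mulnC. Qed.

Lemma Mpoints_Mset : is_Mset (fun x => List.In x Mpoints).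
Proof.
split=> [x y /In_Mpoints[p p0 ->] /In_Mpoints[q q0 ->] pq | x /In_Mpoints[p _ ->]].
  have {}pq : p != q by apply/eqP => epq; apply: pq; rewrite epq.
  by apply/norm_inf_midpoint_eq1; split=> [i|]; [apply: Mpoint_sum_le | apply: Mpoint_sum_attained].
exact: Mpoint_norm_gt1.
Qed.

End Construction.

Theorem theorem7 (d : nat) : (2 <= d)%nat -> m_equals d (2 * d - 1)%nat.
Proof.
move=> d_ge2; have d_gt0 : (0 < d)%nat by apply: leq_trans d_ge2.
pose k0 : 'I_d := Ordinal d_gt0; pose k1 : 'I_d := Ordinal d_ge2.
split.
  exists (Mpoints k0); split; first exact: NoDup_Mpoints.
  by split; [rewrite length_Mpoints subn1 | exact: Mpoints_Mset].
move=> S S_Mset l l_uniq lS; rewrite subn1 -ltnS prednK ?muln_gt0 ?d_gt0 //.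
exact: (Mset_length_lt S_Mset (k0 := k0) (k1 := k1)).
Qed.
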